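(* Let $X=\{(x_1,y_1),\dots,(x_m,y_m)\}$ be a finite subset of $\mathbb R^2$ with at least two points, let $\gamma=\min\{d(x,y):x\neq y\in X\}$, let $n$ be a positive integer, and let $P=\{\text{left-}r,\ \text{right-}r: r=\gamma,2\gamma,\dots,2n\gamma\}$. Equip each point $x\in X$ with the neighborhoods $L(r,x)$ of type left-$r$ and $R(r,x)$ of type right-$r$ for $r\in\{\gamma,2\gamma,\dots,2n\gamma\}$. If $2n\gamma\geq\max\{d(x,y):x\neq y\in X\}$ and the resulting typed space is symmetrically typed, then $X$ lies on a vertical line, i.e. there is a constant $a$ with $x_i=a$ for all $i\leq m$.
   Context: $d$ is Euclidean distance. For $x=(a,b)\in X$ and $r>0$: $L(r,x)=\{y=(c,e)\in X: d(x,y)\leq r,\ c\leq a\}$ and $R(r,x)=\{y=(c,e)\in X: d(x,y)\leq r,\ c\geq a\}$. In the resulting typed space (with the discrete topology on $X$), the type-$p$ neighborhoods of $x$ are: $L(r,x)$ for $p=\text{left-}r$, and $R(r,x)$ for $p=\text{right-}r$. For a type $p$, the space is $p$-symmetrically typed if for any $x,y\in X$ such that $y\notin U$ for some type-$p$ neighborhood $U$ of $x$, there exists a type-$p$ neighborhood $V$ of $y$ with $x\notin V$. The space is symmetrically typed if it is $p$-symmetrically typed for every type $p\in P$. *)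

From Stdlib Require Import Reals List.
Import ListNotations.
Open Scope R_scope.

Definition dist2 (x y : R * R) : R :=
  sqrt ((fst x - fst y) ^ 2 + (snd x - snd y) ^ 2).

Inductive side := LeftS | RightS.

(* Types p = left-r / right-r are pairs (side, r). *)
Definition typ := (side * R)%type.

Definition Lnb (X : list (R * R)) (r : R) (x : R * R) : R * R -> Prop :=
  fun y => In y X /\ dist2 x y <= r /\ fst y <= fst x.
Definition Rnb (X : list (R * R)) (r : R) (x : R * R) : R * R -> Prop :=
  fun y => In y X /\ dist2 x y <= r /\ fst x <= fst y.

Definition typed_nbhd (X : list (R * R)) (p : typ) (x : R * R) : R * R -> Prop :=
  match fst p with
  | LeftS => Lnb X (snd p) x
  | RightS => Rnb X (snd p) x
  end.

Definition in_P (gamma : R) (n : nat) (p : typ) : Prop :=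
  exists k : nat, (1 <= k <= 2 * n)%nat /\ snd p = INR k * gamma.

Definition p_symmetric (X : list (R * R)) (p : typ) : Prop :=
  forall x y, In x X -> In y X ->
    (exists U, U = typed_nbhd X p x /\ ~ U y) ->
    (exists V, V = typed_nbhd X p y /\ ~ V x).

Definition symmetrically_typed (X : list (R * R)) (gamma : R) (n : nat) : Prop :=
  forall p, in_P gamma n p -> p_symmetric X p.

(* Only the largest type, left-(2n gamma), is needed.  Since 2n gamma bounds the
   diameter of X, the left neighbourhood of that radius around y contains every
   point of X weakly to the left of y.  If x were strictly to the left of y, then
   y would miss the neighbourhood of x while x lies in that of y, which contradicts
   symmetry; so no two points of X have different abscissae.  Neither the
   minimality of gamma nor the size of X plays a role. *)
From Stdlib Require Import Reals List Lra Lia.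
Open Scope R_scope.

Lemma dist2_sym x y : dist2 x y = dist2 y x.
Proof. unfold dist2; f_equal; ring. Qed.

Lemma in_P_top gamma n s : (0 < n)%nat -> in_P gamma n (s, 2 * INR n * gamma).
Proof.
  intros Hn; exists (2 * n)%nat; split; [lia |].
  simpl snd; rewrite mult_INR; simpl (INR 2); ring.
Qed.

Lemma left_symmetric_fst_le X r :
  (forall x y, In x X -> In y X -> x <> y -> dist2 x y <= r) ->
  p_symmetric X (LeftS, r) ->
  forall x y, In x X -> In y X -> fst y <= fst x.
Proof.
  intros Hdiam Hsym x y Hx Hy.
  destruct (Rle_or_lt (fst y) (fst x)) as [Hle | Hlt]; [exact Hle | exfalso].
  assert (Hxy : x <> y) by (intros ->; lra).
  destruct (Hsym x y Hx Hy) as [V [-> HxV]].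
  - exists (typed_nbhd X (LeftS, r) x); split; [reflexivity |].
    intros [_ [_ Hyx]]; lra.
  - apply HxV; repeat split.
    + exact Hx.
    + rewrite dist2_sym; apply Hdiam; assumption.
    + lra.
Qed.

Lemma fst_const_of_le (X : list (R * R)) :
  (forall x y, In x X -> In y X -> fst y <= fst x) ->
  exists a, forall p, In p X -> fst p = a.
Proof.
  intros Hle; destruct X as [| x0 X'].
  - exists 0; intros p [].
  - exists (fst x0); intros p Hp.
    apply Rle_antisym; apply Hle; simpl; auto.
Qed.

Theorem theorem5p5 (X : list (R * R)) (gamma : R) (n : nat) :
  NoDup X -> (2 <= length X)%nat ->
  (* gamma = min { d(x,y) : x <> y in X } *)
  (forall x y, In x X -> In y X -> x <> y -> gamma <= dist2 x y) ->
  (exists x y, In x X /\ In y X /\ x <> y /\ dist2 x y = gamma) ->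
  (0 < n)%nat ->
  (* 2 n gamma >= max { d(x,y) : x <> y in X } *)
  (forall x y, In x X -> In y X -> x <> y -> dist2 x y <= 2 * INR n * gamma) ->
  symmetrically_typed X gamma n ->
  exists a : R, forall p, In p X -> fst p = a.
Proof.
  intros _ _ _ _ Hn Hdiam Hsym.
  apply fst_const_of_le, (left_symmetric_fst_le X (2 * INR n * gamma) Hdiam).
  apply Hsym, in_P_top, Hn.
Qed.
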